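(* Let $p=\tfrac23$, $q=\tfrac13$, and let $g_0(z),g_1(z),g_2(z),\dots$ and $g_\beta(z)$ be the formal power series in $z$ uniquely determined by $$g_0=1+zg_\beta+qzg_2,\qquad g_\beta=qzg_1,\qquad g_1=zg_0+qzg_3,\qquad g_i=pzg_{i-1}+qzg_{i+2}\ (i\ge2).$$ Put $G(u,z)=\sum_{i\ge0}u^ig_i(z)$, write $V=uz$, $x=z^3$, and let $t=t(x)$ be the formal power series with $t(0)=0$ satisfying $x=\tfrac{27}{4}t(1-t)^2$. Then: (i) $$G(u,z)=2\,\frac{2+\frac{2}{3(1-t)}V}{(1-3t)(4-3t)}\cdot\frac{1}{1-\frac{2}{3(1-t)}V};$$ in particular, written in the variable $V$, only powers of $z$ that are multiples of $3$ appear. (ii) For $j\ge1$, $$[V^j]G=\frac{6}{(1-3t)(4-3t)}\Big(\frac23\cdot\frac1{1-t}\Big)^j,\qquad [u^j]G=z^j\frac{6}{(1-3t)(4-3t)}\Big(\frac23\cdot\frac1{1-t}\Big)^j.$$ (iii) For $j\ge1$ and $N\ge0$, $$[z^{j+3N}u^j]G(u,z)=\sum_{i=0}^N\frac{2^{2i+j-1}}{3^{2N+i+j-1}}\binom{2N+j+i}{i}.$$ (iv) For $N\ge0$, $$[z^{3N}]g_0=\sum_{i=0}^N\frac{2^{2i}}{3^{2N+i}}\binom{2N+i}{i},\qquad [z^{3N+2}]g_\beta=\frac13[z^{3N+1}]g_1=\sum_{i=0}^N\frac{2^{2i}}{3^{2N+i+1}}\binom{2N+1+i}{i}.$$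
   Context: Dual online bin-packing model: bins have size 1; at each step either a single item of size $\tfrac23$ arrives (probability $p=\tfrac23$) or a double-pack of two items of size $\tfrac13$ arrives (probability $q=\tfrac13$). State $i\ge0$ means $i$ boxes filled to $\tfrac23$; $\beta$ is an exceptional state (one box filled to $\tfrac13$). The coefficient of $z^n$ in $g_i(z)$ (resp. $g_\beta(z)$) is the probability that $n$ random steps starting from state $0$ lead to state $i$ (resp. $\beta$); these series are defined by the recursion in the claim. $[\cdot]$ denotes coefficient extraction. *)

From mathcomp Require Import all_boot all_order all_algebra.
Set Implicit Arguments. Unset Strict Implicit. Unset Printing Implicit Defensive.
Import Order.TTheory GRing.Theory Num.Theory.
Local Open Scope ring_scope.

Definition fps := nat -> rat.
Definition fps_const (c : rat) : fps := fun n => if n == 0%N then c else 0.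
Definition fps_X : fps := fun n => if n == 1%N then 1 else 0.
Definition fps_add (f g : fps) : fps := fun n => f n + g n.
Definition fps_scale (c : rat) (f : fps) : fps := fun n => c * f n.
Definition fps_mul (f g : fps) : fps :=
  fun n => \sum_(i < n.+1) f i * g (n - i)%N.
Definition fps_pow (f : fps) (k : nat) : fps := iter k (fps_mul f) (fps_const 1).

(* multiplicative inverse (meaningful when f 0 <> 0), coefficients by the
   usual recursion  inv_0 = 1/f_0,  inv_{n+1} = -(1/f_0) sum_{k=1}^{n+1} f_k inv_{n+1-k} *)
Fixpoint fps_inv_seq (f : fps) (n : nat) : seq rat :=
  match n with
  | 0%N => [:: (f 0%N)^-1]
  | n'.+1 => let s := fps_inv_seq f n' in
      rcons s (- (f 0%N)^-1 * \sum_(i < n'.+1) f i.+1 * nth 0 s (n' - i)%N)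
  end.
Definition fps_inv (f : fps) : fps := fun n => nth 0 (fps_inv_seq f n) n.

(* substitution x := z^3 *)
Definition fps_sub3 (f : fps) : fps :=
  fun n => if (3 %| n)%N then f (n %/ 3)%N else 0.
Definition fps_shift (j : nat) (f : fps) : fps :=
  fun n => if (j <= n)%N then f (n - j)%N else 0.

(* ---------- bivariate series: F i n = [u^i z^n] F ---------- *)
Definition bps := nat -> nat -> rat.
Definition bps_const (c : rat) : bps :=
  fun i n => if (i == 0%N) && (n == 0%N) then c else 0.
Definition bps_of_z (f : fps) : bps := fun i n => if i == 0%N then f n else 0.
Definition bps_V : bps := fun i n => if (i == 1%N) && (n == 1%N) then 1 else 0.
Definition bps_add (F H : bps) : bps := fun i n => F i n + H i n.
Definition bps_scale (c : rat) (F : bps) : bps := fun i n => c * F i n.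
Definition bps_mul (F H : bps) : bps :=
  fun i n => \sum_(a < i.+1) \sum_(b < n.+1) F a b * H (i - a)%N (n - b)%N.
Definition bps_pow (F : bps) (k : nat) : bps := iter k (bps_mul F) (bps_const 1).
(* 1/(1-W) := sum_k W^k, for W with zero constant term (then W^k has no
   monomial u^i z^n with i+n < k, so the sum below is the full sum) *)
Definition bps_geom (W : bps) : bps :=
  fun i n => \sum_(k < (i + n).+1) bps_pow W k i n.

Definition p_step : rat := 2%:R / 3%:R.
Definition q_step : rat := 1 / 3%:R.

From HB Require Import structures.
From mathcomp Require Import all_boot all_order all_algebra.
From mathcomp Require Import boolp ring zify.
Import Order.TTheory GRing.Theory Num.Theory.
Local Open Scope ring_scope.

(* Put x = z^3, a = 2/(3(1-t)) and D = 1/((1-3t)(4-3t)).  The parametrization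
   x = 27/4 t(1-t)^2 turns into the two algebraic identities 3a = 2 + x a^3 and
   4D = 1 + 2xD(a + a^2), and these alone show that g_0 = 4 D(z^3) and
   g_j = 6 z^j (D a^j)(z^3) solve the defining system.  That system has a
   unique solution, since each equation gives the coefficient of z^(n+1) in
   terms of coefficients of z^n.  Resumming the g_j u^j as a geometric series
   in V = uz gives (i).  Finally, the identities translate into recurrences
   determining e(j, N) = [x^N] D a^j, and the binomial sums satisfy the same
   recurrences: by Pascal's rule in general, and by a telescoping identity
   for e(0, N+1). *)

(** * Formal power series over rat *)

Definition fps_trunc (n : nat) (f : fps) : {poly rat} := \poly_(i < n.+1) f i.

(* Ring identities between series are transferred from {poly rat}: the
   coefficients of index <= n of a sum or product only involve coefficients of
   index <= n of the operands. *)
Definition fps_agree (n : nat) (f : fps) (P : {poly rat}) : Prop :=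
  forall k, (k <= n)%N -> f k = P`_k.

Lemma fps_agree_trunc n f : fps_agree n f (fps_trunc n f).
Proof. by move=> k kn; rewrite coef_poly ltnS kn. Qed.

Lemma fps_agree_add n f g P Q :
  fps_agree n f P -> fps_agree n g Q -> fps_agree n (fps_add f g) (P + Q).
Proof. by move=> hf hg k kn; rewrite coefD /fps_add hf ?hg. Qed.

Lemma fps_agree_mul n f g P Q :
  fps_agree n f P -> fps_agree n g Q -> fps_agree n (fps_mul f g) (P * Q).
Proof.
move=> hf hg k kn; rewrite coefM; apply: eq_bigr => i _.
have ik : (i <= k)%N by rewrite -ltnS.
by rewrite hf ?hg //; [exact: leq_trans (leq_subr _ _) kn | exact: leq_trans ik kn].
Qed.

Lemma fps_agree_const n c : fps_agree n (fps_const c) c%:P.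
Proof. by move=> k _; rewrite coefC; case: k. Qed.

Lemma fps_agree_X n : fps_agree n fps_X 'X.
Proof. by move=> k _; rewrite coefX; case: k => [|[|k]]. Qed.

Lemma fps_agree_sub3 n f P : fps_agree n f P -> fps_agree n (fps_sub3 f) (P \Po 'X^3).
Proof.
move=> hf k kn; rewrite coef_comp_poly_Xn // /fps_sub3.
by case: ifP => // _; rewrite hf //; exact: leq_trans (leq_div _ _) kn.
Qed.

Lemma fps_eq_agree (f g : fps) :
  (forall n, exists P, fps_agree n f P /\ fps_agree n g P) -> f = g.
Proof. by move=> h; apply/funext => n; have [P [-> // ->]] := h n. Qed.

Ltac fps_agree_solve :=
  repeat (apply: fps_agree_add || apply: fps_agree_mul || apply: fps_agree_sub3
          || apply: fps_agree_const || apply: fps_agree_X || apply: fps_agree_trunc).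

Lemma fps_mulA : associative fps_mul.
Proof.
move=> f g h; apply: fps_eq_agree => n.
exists (fps_trunc n f * (fps_trunc n g * fps_trunc n h)).
by rewrite [X in _ /\ fps_agree _ _ X]mulrA; split; fps_agree_solve.
Qed.

Lemma fps_mulC : commutative fps_mul.
Proof.
move=> f g; apply: fps_eq_agree => n; exists (fps_trunc n f * fps_trunc n g).
by rewrite [X in _ /\ fps_agree _ _ X]mulrC; split; fps_agree_solve.
Qed.

Lemma fps_mul1 : left_id (fps_const 1) fps_mul.
Proof.
move=> f; apply: fps_eq_agree => n; exists (1%:P * fps_trunc n f).
by rewrite [X in _ /\ fps_agree _ _ X]mul1r; split; fps_agree_solve.
Qed.

Lemma fps_mulDl : left_distributive fps_mul fps_add.
Proof.
move=> f g h; apply: fps_eq_agree => n.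
exists ((fps_trunc n f + fps_trunc n g) * fps_trunc n h).
by rewrite [X in _ /\ fps_agree _ _ X]mulrDl; split; fps_agree_solve.
Qed.

Definition fps_opp (f : fps) : fps := fun n => - f n.

Lemma fps_addA : associative fps_add.
Proof. by move=> f g h; apply/funext => n; apply: addrA. Qed.

Lemma fps_addC : commutative fps_add.
Proof. by move=> f g; apply/funext => n; apply: addrC. Qed.

Lemma fps_add0 : left_id (fps_const 0) fps_add.
Proof. by move=> f; apply/funext => n; rewrite /fps_add /fps_const if_same add0r. Qed.

Lemma fps_addN : left_inverse (fps_const 0) fps_opp fps_add.
Proof. by move=> f; apply/funext => n; rewrite /fps_add /fps_const if_same addNr. Qed.

Lemma fps_one_neq0 : fps_const 1 != fps_const 0.
Proof. by apply/eqP => /(congr1 (fun f : fps => f 0%N))/eqP; rewrite oner_eq0. Qed.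

HB.instance Definition _ := gen_eqMixin fps.
HB.instance Definition _ := gen_choiceMixin fps.
HB.instance Definition _ :=
  GRing.isZmodule.Build fps fps_addA fps_addC fps_add0 fps_addN.
HB.instance Definition _ :=
  GRing.Zmodule_isComNzRing.Build fps fps_mulA fps_mulC fps_mul1 fps_mulDl fps_one_neq0.

Lemma fps_scaleA a b f : fps_scale a (fps_scale b f) = fps_scale (a * b) f.
Proof. by apply/funext => n; apply: mulrA. Qed.

Lemma fps_scale1 : left_id 1 fps_scale.
Proof. by move=> f; apply/funext => n; apply: mul1r. Qed.

Lemma fps_scaleDr : right_distributive fps_scale +%R.
Proof. by move=> a f g; apply/funext => n; apply: mulrDr. Qed.

Lemma fps_scaleDl f : {morph fps_scale^~ f : a b / a + b}.
Proof. by move=> a b; apply/funext => n; apply: mulrDl. Qed.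

HB.instance Definition _ :=
  GRing.Zmodule_isLmodule.Build rat fps fps_scaleA fps_scale1 fps_scaleDr fps_scaleDl.

Lemma fps_scaleAl a (f g : fps) : a *: (f * g) = (a *: f) * g.
Proof.
apply/funext => n; rewrite /GRing.scale /= /fps_scale mulr_sumr.
by apply: eq_bigr => i _; rewrite mulrA.
Qed.

HB.instance Definition _ := GRing.Lmodule_isLalgebra.Build rat fps fps_scaleAl.
HB.instance Definition _ := GRing.Lalgebra_isComAlgebra.Build rat fps.

Lemma fps_agree_pow n (f : fps) P k : fps_agree n f P -> fps_agree n (f ^+ k) (P ^+ k).
Proof.
move=> hf; elim: k => [|k IH]; first by rewrite !expr0 -polyC1; apply: fps_agree_const.
by rewrite !exprS; apply: fps_agree_mul.
Qed.

Lemma fps_coefD (f g : fps) n : (f + g) n = f n + g n.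
Proof. by []. Qed.

Lemma fps_coefN (f : fps) n : (- f) n = - f n.
Proof. by []. Qed.

Lemma fps_coefZ c (f : fps) n : (c *: f) n = c * f n.
Proof. by []. Qed.

Lemma fps_coefM (f g : fps) n : (f * g) n = \sum_(i < n.+1) f i * g (n - i)%N.
Proof. by []. Qed.

Lemma fps_coef1 n : (1 : fps) n = (n == 0%N)%:R.
Proof. by case: n. Qed.

Lemma fps_coef0 n : (0 : fps) n = 0.
Proof. by case: n. Qed.

Lemma fps_coefMn (f : fps) m n : (f *+ m) n = f n *+ m.
Proof. by elim: m => [|m IH]; rewrite ?mulr0n ?fps_coef0 // !mulrS fps_coefD IH. Qed.

Lemma fps_coef_natM m (f : fps) n : (m%:R * f) n = m%:R * f n.
Proof. by rewrite !mulr_natl fps_coefMn. Qed.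

Lemma fps_coef_sum I (r : seq I) (P : pred I) (F : I -> fps) n :
  (\sum_(k <- r | P k) F k) n = \sum_(k <- r | P k) F k n.
Proof. by apply: (big_morph (fun f : fps => f n)) => [f g|]; rewrite ?fps_coef0. Qed.

Lemma fps_constE c : fps_const c = c%:A.
Proof.
by apply/funext => -[|n]; rewrite [RHS]/(fps_scale c 1 _) /= /fps_const /= ?mulr1 ?mulr0.
Qed.

Lemma fps_powE (f : fps) k : fps_pow f k = f ^+ k.
Proof. by elim: k => // k IH; rewrite exprS -IH. Qed.

Lemma fps_shiftE j (f : fps) : fps_shift j f = fps_X ^+ j * f.
Proof.
apply: fps_eq_agree => n; exists ('X^j * fps_trunc n f); split.
  move=> k kn; rewrite coefXnM /fps_shift ltnNge; case: ifP => //= jk.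
  by rewrite (fps_agree_trunc n f) // (leq_trans (leq_subr _ _) kn).
by apply: fps_agree_mul; [exact: fps_agree_pow (fps_agree_X n) | exact: fps_agree_trunc].
Qed.

Lemma fps_coefXnM j (f : fps) n :
  (fps_X ^+ j * f) n = if (j <= n)%N then f (n - j)%N else 0.
Proof. by rewrite -fps_shiftE. Qed.

Lemma fps_coefXnM_add j (f : fps) n : (fps_X ^+ j * f) (j + n)%N = f n.
Proof. by rewrite fps_coefXnM leq_addr addKn. Qed.

Lemma fps_coefXM (f : fps) n : (fps_X * f) n = if n is n'.+1 then f n' else 0.
Proof. by rewrite -[fps_X]expr1 fps_coefXnM; case: n => // n; rewrite subn1. Qed.

Lemma fps_sub3_is_nmod : nmod_morphism fps_sub3.
Proof.
split=> [|f g]; apply/funext => n; rewrite /fps_sub3 /=.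
  by rewrite !fps_coef0 if_same.
by rewrite !fps_coefD; case: ifP; rewrite ?addr0.
Qed.

Lemma fps_sub3_is_monoid : GRing.monoid_morphism fps_sub3.
Proof.
split=> [|f g].
  apply: fps_eq_agree => n; exists 1%:P; split; last exact: fps_agree_const.
  by rewrite -(comp_polyC 1 'X^3); apply: fps_agree_sub3; apply: fps_agree_const.
apply: fps_eq_agree => n; exists ((fps_trunc n f * fps_trunc n g) \Po 'X^3).
by rewrite [X in _ /\ fps_agree _ _ X]comp_polyM; split; fps_agree_solve.
Qed.

HB.instance Definition _ := GRing.isNmodMorphism.Build fps fps fps_sub3 fps_sub3_is_nmod.
HB.instance Definition _ := GRing.isMonoidMorphism.Build fps fps fps_sub3 fps_sub3_is_monoid.

Lemma fps_sub3X : fps_sub3 fps_X = fps_X ^+ 3.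
Proof.
apply: fps_eq_agree => n; exists 'X^3; split; last exact/fps_agree_pow/fps_agree_X.
by rewrite -(comp_polyX 'X^3); apply/fps_agree_sub3/fps_agree_X.
Qed.

Lemma fps_sub3_mul3 f k : fps_sub3 f (3 * k)%N = f k.
Proof. by rewrite /fps_sub3 dvdn_mulr // mulKn. Qed.

Lemma size_fps_inv_seq f n : size (fps_inv_seq f n) = n.+1.
Proof. by elim: n => //= n IH; rewrite size_rcons IH. Qed.

Lemma nth_fps_inv_seq f n k : (k <= n)%N -> nth 0 (fps_inv_seq f n) k = fps_inv f k.
Proof.
elim: n => [|n IH]; first by rewrite leqn0 => /eqP ->.
rewrite leq_eqVlt => /orP [/eqP -> //| kn].
by rewrite /= nth_rcons size_fps_inv_seq kn IH.
Qed.

Lemma fps_invS f n : fps_inv f n.+1 =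
  - (f 0%N)^-1 * \sum_(i < n.+1) f i.+1 * fps_inv f (n - i)%N.
Proof.
rewrite {1}/fps_inv /= nth_rcons size_fps_inv_seq ltnn eqxx; congr (_ * _).
by apply: eq_bigr => i _; rewrite nth_fps_inv_seq // leq_subr.
Qed.

Lemma fps_mulV (f : fps) : f 0%N != 0 -> f * fps_inv f = 1.
Proof.
move=> f0; apply/funext => -[|n]; rewrite fps_coefM fps_coef1.
  by rewrite big_ord1 divff.
rewrite big_ord_recl /= fps_invS mulrA mulrN mulfV // mulN1r.
under [X in _ + X]eq_bigr do rewrite /bump /= add1n subSS.
by rewrite addNr.
Qed.

(** * The walk system and its solution *)

Section Parametrization.

Context {R : comAlgType rat} {x t s a D : R}.
Hypotheses (ts : (1 - t) * s = 1) (xt : x = (27%:R / 4%:R) *: (t * (1 - t) ^+ 2))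
  (sa : a = (2%:R / 3%:R) *: s).

Lemma natr_mulZ n (c : rat) (v : R) : n%:R * (c *: v) = (n%:R * c) *: v.
Proof. by rewrite mulr_natl scalerMnl -mulr_natl. Qed.

Lemma param_a_eq : 3%:R * a = 2%:R + x * a ^+ 3.
Proof.
have xa3 : x * a ^+ 3 = 2%:R * (t * s).
  have -> : x * a ^+ 3 = (27%:R / 4%:R * (2%:R / 3%:R) ^+ 3) *: (t * s * ((1 - t) * s) ^+ 2).
    by rewrite xt sa exprZn -scalerAl -scalerAr scalerA; congr (_ *: _); ring.
  by rewrite ts expr1n mulr1 [RHS]mulr_natl -scaler_nat.
rewrite xa3 sa natr_mulZ (_ : 3%:R * _ = 2%:R) // scaler_nat -mulr_natl.
transitivity (2%:R * ((1 - t) * s + t * s)); first ring.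
by rewrite ts mulrDr mulr1.
Qed.

Hypothesis tD : (1 - 3%:R * t) * (4%:R - 3%:R * t) * D = 1.

Lemma param_D_eq : 4%:R * D = 1 + 2%:R * x * D * a + 2%:R * x * D * a ^+ 2.
Proof.
have xa : 2%:R * (x * a) = 9%:R * (t * (1 - t)).
  have -> : x * a = (27%:R / 4%:R * (2%:R / 3%:R)) *: (t * (1 - t) * ((1 - t) * s)).
    by rewrite xt sa -scalerAl -scalerAr scalerA; congr (_ *: _); ring.
  by rewrite natr_mulZ ts mulr1 [RHS]mulr_natl -scaler_nat.
have xa2 : 2%:R * (x * a ^+ 2) = 6%:R * t.
  have -> : x * a ^+ 2 = (27%:R / 4%:R * (2%:R / 3%:R) ^+ 2) *: (t * ((1 - t) * s) ^+ 2).
    by rewrite xt sa exprZn -scalerAl -scalerAr scalerA; congr (_ *: _); ring.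
  by rewrite natr_mulZ ts expr1n mulr1 [RHS]mulr_natl -scaler_nat.
transitivity (((1 - 3%:R * t) * (4%:R - 3%:R * t) + 2%:R * (x * a) + 2%:R * (x * a ^+ 2)) * D).
  by rewrite xa xa2; ring.
by rewrite mulrDl mulrDl tD; ring.
Qed.

End Parametrization.

Lemma param_series_eqs {t : fps} :
  t 0%N = 0 -> fps_X = (27%:R / 4%:R) *: (t * (1 - t) ^+ 2) ->
  let a := (2%:R / 3%:R) *: fps_inv (1 - t) in
  let D := fps_inv ((1 - 3%:R * t) * (4%:R - 3%:R * t)) in
  3%:R * a = 2%:R + fps_X * a ^+ 3
  /\ 4%:R * D = 1 + 2%:R * fps_X * D * a + 2%:R * fps_X * D * a ^+ 2.
Proof.
move=> t0 xt a D.
have ts : (1 - t) * fps_inv (1 - t) = 1.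
  by apply: fps_mulV; rewrite fps_coefD fps_coefN t0 subr0 fps_coef1 oner_eq0.
have tD : (1 - 3%:R * t) * (4%:R - 3%:R * t) * D = 1.
  apply: fps_mulV; rewrite fps_coefM big_ord1 !fps_coefD !fps_coefN !fps_coef_natM t0.
  by rewrite fps_coef1 -[4%:R]mulr1 fps_coef_natM fps_coef1.
by split; [apply: param_a_eq ts xt _ | apply: param_D_eq ts xt _ tD].
Qed.

Definition walk_system (g : nat -> fps) (gb : fps) : Prop :=
  [/\ g 0%N = 1 + (fps_X * gb + q_step *: (fps_X * g 2%N)),
      gb = q_step *: (fps_X * g 1%N),
      g 1%N = fps_X * g 0%N + q_step *: (fps_X * g 3%N) &
      forall i, (2 <= i)%N -> g i = p_step *: (fps_X * g i.-1) + q_step *: (fps_X * g i.+2)].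

Lemma walk_system_unique {g gb g' gb'} :
  walk_system g gb -> walk_system g' gb' -> g = g' /\ gb = gb'.
Proof.
move=> [h0 hb h1 hi] [h0' hb' h1' hi'].
suff coef_eq n : (forall i, g i n = g' i n) /\ gb n = gb' n.
  by split; [apply/funext => i|]; apply/funext => n; have [] := coef_eq n.
elim: n => [|n [IH IHb]].
  split; last by rewrite hb hb' !fps_coefZ !fps_coefXM.
  case=> [|[|i]]; first by rewrite h0 h0' !fps_coefD !fps_coefZ !fps_coefXM.
    by rewrite h1 h1' !fps_coefD !fps_coefZ !fps_coefXM.
  by rewrite hi // hi' // !fps_coefD !fps_coefZ !fps_coefXM.
split; last by rewrite hb hb' !fps_coefZ !fps_coefXM IH.
case=> [|[|i]]; first by rewrite h0 h0' !fps_coefD !fps_coefZ !fps_coefXM IH IHb.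
  by rewrite h1 h1' !fps_coefD !fps_coefZ !fps_coefXM !IH.
by rewrite hi // hi' // !fps_coefD !fps_coefZ !fps_coefXM !IH.
Qed.

Lemma scale_q_step_mul3 (V : lmodType rat) (v : V) : q_step *: (v *+ 3) = v.
Proof. by rewrite -scalerMnr scalerMnl (_ : q_step *+ 3 = 1) ?scale1r. Qed.

Lemma scale_p_step (V : lmodType rat) (v : V) : p_step *: v = q_step *: (v *+ 2).
Proof. by rewrite -scalerMnr scalerMnl. Qed.

Lemma walk_system_mul3 (g : nat -> fps) :
  g 0%N *+ 3 = 3%:R + fps_X ^+ 2 * g 1%N + fps_X * g 2%N ->
  g 1%N *+ 3 = fps_X * g 0%N *+ 3 + fps_X * g 3%N ->
  (forall i, (2 <= i)%N -> g i *+ 3 = fps_X * g i.-1 *+ 2 + fps_X * g i.+2) ->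
  walk_system g (q_step *: (fps_X * g 1%N)).
Proof.
move=> h0 h1 hi; split=> // [|| i /hi hi3].
- rewrite -scalerAr -scalerDr -[1](scale_q_step_mul3 _ 1) -scalerDr mulrA -expr2 addrA.
  by rewrite -h0 scale_q_step_mul3.
- by rewrite -[fps_X * g 0%N in RHS]scale_q_step_mul3 -scalerDr -h1 scale_q_step_mul3.
- by rewrite scale_p_step -scalerDr -hi3 scale_q_step_mul3.
Qed.

Lemma powS_of_cubic {R : comNzRingType} {y a : R} (c : R) k :
  3%:R * a = 2%:R + y * a ^+ 3 -> c * a ^+ k.+1 *+ 3 = c * a ^+ k *+ 2 + y * (c * a ^+ k.+3).
Proof.
move=> cubic; transitivity (c * a ^+ k * (3%:R * a)); first by rewrite exprS; ring.
by rewrite cubic !exprS; ring.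
Qed.

Definition walk_gf (D a : fps) (j : nat) : fps :=
  if j is 0 then fps_sub3 (4%:R *: D) else fps_X ^+ j * fps_sub3 (6%:R *: (D * a ^+ j)).

Lemma walk_gf0 D a : walk_gf D a 0 = fps_sub3 D *+ 4.
Proof. by rewrite /walk_gf scaler_nat rmorphMn. Qed.

Lemma walk_gfS D a j :
  walk_gf D a j.+1 = fps_X ^+ j.+1 * (fps_sub3 D * fps_sub3 a ^+ j.+1) *+ 6.
Proof. by rewrite /walk_gf scaler_nat rmorphMn rmorphM rmorphXn mulrnAr. Qed.

Lemma walk_gf_coef0 D a N : walk_gf D a 0 (3 * N)%N = 4%:R * D N.
Proof. by rewrite /walk_gf fps_sub3_mul3 fps_coefZ. Qed.

Lemma walk_gf_coef D a j N :
  (1 <= j)%N -> walk_gf D a j (j + 3 * N)%N = 6%:R * (D * a ^+ j) N.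
Proof. by case: j => // j _; rewrite /walk_gf fps_coefXnM_add fps_sub3_mul3 fps_coefZ. Qed.

Lemma walk_gf_support D a j n : walk_gf D a j n != 0 -> (j <= n)%N /\ (3 %| n - j)%N.
Proof.
case: j => [|j]; first by rewrite /= /fps_sub3 subn0; case: ifP; rewrite ?eqxx.
by rewrite /= fps_coefXnM /fps_sub3; case: ifP => //; case: ifP; rewrite ?eqxx.
Qed.

(* The recurrences that 3a = 2 + x a^3 and 4D = 1 + 2xD(a + a^2) impose on
   c j N = [x^N] D a^j. *)
Definition walk_rec (c : nat -> nat -> rat) : Prop :=
  [/\ 4%:R * c 0%N 0%N = 1,
      forall N, 4%:R * c 0%N N.+1 = 2%:R * (c 1%N N + c 2%N N),
      forall j, 3%:R * c j.+1 0%N = 2%:R * c j 0%N &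
      forall j N, 3%:R * c j.+1 N.+1 = 2%:R * c j N.+1 + c j.+3 N].

Lemma walk_rec_unique {c c'} : walk_rec c -> walk_rec c' -> forall j N, c j N = c' j N.
Proof.
move=> [c00 c0S cS0 cSS] [d00 d0S dS0 dSS] j N; elim: N j => [|N IH] j.
  elim: j => [|j IHj]; first by apply: (@mulfI _ 4%:R) => //; rewrite c00 d00.
  by apply: (@mulfI _ 3%:R) => //; rewrite cS0 dS0 IHj.
elim: j => [|j IHj]; first by apply: (@mulfI _ 4%:R) => //; rewrite c0S d0S !IH.
by apply: (@mulfI _ 3%:R) => //; rewrite cSS dSS IHj IH.
Qed.

Section WalkSolution.

Context {D a : fps}.
Hypotheses (a_eq : 3%:R * a = 2%:R + fps_X * a ^+ 3)
  (D_eq : 4%:R * D = 1 + 2%:R * fps_X * D * a + 2%:R * fps_X * D * a ^+ 2).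

Lemma walk_gf_system : walk_system (walk_gf D a) (q_step *: (fps_X * walk_gf D a 1)).
Proof.
set A := fps_sub3 a; set B := fps_sub3 D.
have sub3_a : 3%:R * A = 2%:R + fps_X ^+ 3 * A ^+ 3.
  have := congr1 fps_sub3 a_eq.
  by rewrite rmorphD 2!rmorphM rmorphXn !rmorph_nat /= fps_sub3X.
have sub3_D : 4%:R * B = 1 + 2%:R * fps_X ^+ 3 * B * (A + A ^+ 2).
  have := congr1 fps_sub3 D_eq.
  rewrite !rmorphD !rmorphM !rmorph_nat rmorph1 /= fps_sub3X => ->.
  by rewrite /A /B; ring.
apply: walk_system_mul3; rewrite ?walk_gf0 ?walk_gfS.
- transitivity (3%:R * (4%:R * B)); first ring.
  by rewrite sub3_D; ring.
- transitivity (fps_X * (B * A ^+ 1 *+ 3) *+ 6); first ring.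
  by rewrite (powS_of_cubic B 0 sub3_a); ring.
- case=> [|[|i]] // _; rewrite !walk_gfS.
  transitivity (fps_X ^+ i.+2 * (B * A ^+ i.+2 *+ 3) *+ 6); first ring.
  by rewrite (powS_of_cubic B i.+1 sub3_a) !exprS; ring.
Qed.

Lemma fps_coef_walk_rec : walk_rec (fun j N => (D * a ^+ j) N).
Proof.
have D_rec : D *+ 4 = 1 + fps_X * ((D * a ^+ 1 + D * a ^+ 2) *+ 2).
  by rewrite -[D *+ 4]mulr_natl D_eq; ring.
have coef_D N : 4%:R * D N = (N == 0%N)%:R
    + (if N is M.+1 then 2%:R * ((D * a ^+ 1) M + (D * a ^+ 2) M) else 0).
  rewrite mulr_natl -fps_coefMn D_rec fps_coefD fps_coef1 fps_coefXM.
  by case: N => // N; rewrite fps_coefMn fps_coefD mulr_natl.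
have coef_Da j N : 3%:R * (D * a ^+ j.+1) N
    = 2%:R * (D * a ^+ j) N + (if N is M.+1 then (D * a ^+ j.+3) M else 0).
  by rewrite !mulr_natl -!fps_coefMn (powS_of_cubic D j a_eq) fps_coefD fps_coefXM.
by split=> [|N|j|j N]; rewrite /= ?coef_Da ?expr0 ?mulr1 ?coef_D ?addr0 ?add0r.
Qed.

End WalkSolution.

(** * The binomial sums *)

Definition binsum (m N : nat) : rat :=
  \sum_(i < N.+1) (4%:R / 3%:R) ^+ i * 'C(m + i, i)%:R.

Lemma binsum0 m : binsum m 0 = 1.
Proof. by rewrite /binsum big_ord1 expr0 addn0 bin0 mul1r. Qed.

Lemma binsumSS m N : binsum m.+1 N.+1 = binsum m N.+1 + 4%:R / 3%:R * binsum m.+1 N.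
Proof.
rewrite /binsum big_ord_recl [X in _ = X + _]big_ord_recl /= !addn0 !bin0 -addrA.
congr (_ + _); rewrite mulr_sumr -big_split /=; apply: eq_bigr => i _.
by rewrite /bump /= !add1n !addnS addSn binS natrD exprS; ring.
Qed.

Lemma mul_bin_addS m k : (m.+1 * 'C(m.+1 + k, k) = (m.+1 + k) * 'C(m + k, k))%N.
Proof. by have := mul_bin_down (m.+1 + k) k; rewrite addnK => <-. Qed.

Lemma binsum_telescope m n :
  m.+1%:R * \sum_(i < n) (4%:R / 3%:R) ^+ i * ('C(m.+1 + i, i)%:R + 3%:R * 'C(m + i, i)%:R)
  = 3%:R * n%:R * (4%:R / 3%:R) ^+ n * 'C(m + n, n)%:R :> rat.
Proof.
elim: n => [|n IH]; first by rewrite big_ord0 mulr0 mulr0 !mul0r.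
rewrite big_ord_recr /= mulrDr IH.
have bin_diag : (n.+1 * 'C(m + n.+1, n.+1) = (m.+1 + n) * 'C(m + n, n))%N.
  by rewrite -mul_bin_diag addnS addSn.
have up := congr1 (fun k => k%:R : rat) (mul_bin_addS m n).
have diag := congr1 (fun k => k%:R : rat) bin_diag.
rewrite /= !natrM in up diag.
transitivity ((4%:R / 3%:R : rat) ^+ n * (3%:R * n%:R * 'C(m + n, n)%:R
    + m.+1%:R * 'C(m.+1 + n, n)%:R + 3%:R * m.+1%:R * 'C(m + n, n)%:R)).
  by ring.
rewrite up exprS.
transitivity ((4%:R / 3%:R : rat) ^+ n * 4%:R * (n.+1%:R * 'C(m + n.+1, n.+1)%:R)).
  by rewrite diag natrD; ring.
by field.
Qed.

Lemma binsum_diag M :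
  binsum (2 * M + 2) M.+1 = 3%:R * binsum (2 * M + 1) M + 2%:R * binsum (2 * M + 2) M.
Proof.
set m := (2 * M + 1)%N; have -> : (2 * M + 2 = m.+1)%N by rewrite addnS.
rewrite /binsum big_ord_recr /=.
suff -> : (4%:R / 3%:R : rat) ^+ M.+1 * 'C(m.+1 + M.+1, M.+1)%:R =
    \sum_(i < M.+1) (4%:R / 3%:R) ^+ i * ('C(m.+1 + i, i)%:R + 3%:R * 'C(m + i, i)%:R).
  by rewrite !mulr_sumr -!big_split /=; apply: eq_bigr => i _; ring.
apply: (@mulfI _ m.+1%:R); first by rewrite pnatr_eq0.
rewrite binsum_telescope mulrCA -[m.+1%:R * _]natrM mul_bin_addS.
have -> : (m.+1 + M.+1 = 3 * M.+1)%N by rewrite /m; lia.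
by rewrite !natrM; ring.
Qed.

Lemma binsum_powE k l m N :
  \sum_(i < N.+1) (2 ^ (2 * i + k))%:R / (3 ^ (2 * N + i + l))%:R * 'C(m + i, i)%:R
  = 2%:R ^+ k / 3%:R ^+ l * 9%:R^-1 ^+ N * binsum m N.
Proof.
rewrite /binsum mulr_sumr; apply: eq_bigr => i _.
rewrite (_ : 9%:R = 3%:R * 3%:R) // (_ : 4%:R = 2%:R * 2%:R) // !natrX !exprD.
rewrite exprVn expr_div_n !exprMn; field.
by rewrite ?expf_neq0.
Qed.

(* The paper's (2/3)^(j-1)/6 for j >= 1 equals (2/3)^j/4, the value for j = 0. *)
Definition walk_coef (j N : nat) : rat :=
  (2%:R / 3%:R) ^+ j / 4%:R * 9%:R^-1 ^+ N * binsum (2 * N + j) N.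

Lemma walk_coef_rec : walk_rec walk_coef.
Proof.
rewrite /walk_coef; split=> [|M|j|j M].
- by rewrite binsum0; field.
- have -> : (2 * M.+1 + 0 = 2 * M + 2)%N by lia.
  by rewrite binsum_diag addn2 !exprS; field.
- by rewrite !binsum0 exprS; field.
- have -> : (2 * M.+1 + j.+1 = (2 * M + 2 + j).+1)%N by lia.
  have -> : (2 * M + j.+3 = (2 * M + 2 + j).+1)%N by lia.
  have -> : (2 * M.+1 + j = 2 * M + 2 + j)%N by lia.
  by rewrite binsumSS !exprS; field.
Qed.

Lemma walk_coef_sumS k N :
  6%:R * walk_coef k.+1 N =
  \sum_(i < N.+1) (2 ^ (2 * i + k.+1 - 1))%:R / (3 ^ (2 * N + i + k.+1 - 1))%:R
                  * 'C(2 * N + k.+1 + i, i)%:R.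
Proof.
under eq_bigr => i _ do rewrite !addnS !subn1 /=.
rewrite binsum_powE /walk_coef addnS exprS expr_div_n; field.
by rewrite expf_neq0.
Qed.

Lemma walk_coef_sum0 N :
  4%:R * walk_coef 0 N =
  \sum_(i < N.+1) (2 ^ (2 * i))%:R / (3 ^ (2 * N + i))%:R * 'C(2 * N + i, i)%:R.
Proof.
under eq_bigr => i _ do rewrite -[(2 * i)%N]addn0 -{1}[(2 * N + i)%N]addn0.
by rewrite binsum_powE /walk_coef addn0; field.
Qed.

Lemma walk_coef_sum1 N :
  1 / 3%:R * (6%:R * walk_coef 1 N) =
  \sum_(i < N.+1) (2 ^ (2 * i))%:R / (3 ^ (2 * N + i + 1))%:R * 'C(2 * N + 1 + i, i)%:R.
Proof.
under eq_bigr => i _ do rewrite -[(2 * i)%N]addn0.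
by rewrite binsum_powE /walk_coef; field.
Qed.

(** * The bivariate series *)

Section KroneckerSums.

Variable R : pzSemiRingType.

Lemma sum_delta0l (f : R) (H : nat -> R) i :
  \sum_(k < i.+1) (if k == 0%N :> nat then f else 0) * H (i - k)%N = f * H i.
Proof.
rewrite big_ord_recl /= subn0 big1 ?addr0 // => k _.
by rewrite /bump /= add1n mul0r.
Qed.

Lemma sum_delta1l (f : R) (H : nat -> R) i :
  \sum_(k < i.+1) (if k == 1%N :> nat then f else 0) * H (i - k)%N
  = if i is i'.+1 then f * H i' else 0.
Proof.
case: i => [|i]; first by rewrite big_ord1 mul0r.
rewrite big_ord_recl /= mul0r add0r.
under eq_bigr => k _ do rewrite /bump /= add1n subSS eqSS.
exact: sum_delta0l.
Qed.

Lemma sum_delta0r (F : nat -> R) (h : R) i :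
  \sum_(k < i.+1) F k * (if (i - k)%N == 0%N then h else 0) = F i * h.
Proof.
rewrite big_ord_recr /= subnn eqxx big1 ?add0r // => k _.
by rewrite subn_eq0 leqNgt ltn_ord mulr0.
Qed.

End KroneckerSums.

Lemma bps_mulE (F H : bps) i :
  bps_mul F H i = \sum_(k < i.+1) (F k : fps) * (H (i - k)%N : fps) :> fps.
Proof. by apply/funext => n; rewrite fps_coef_sum. Qed.

Lemma bps_of_zE f k : bps_of_z f k = if k == 0%N then f else 0.
Proof. by apply/funext => n; case: k => //= k; rewrite fps_coef0. Qed.

Lemma bps_VE k : bps_V k = if k == 1%N then fps_X else 0.
Proof. by apply/funext => n; case: k => [|[|k]] /=; rewrite ?fps_coef0 ?andbF. Qed.

Lemma bps_constE c k : bps_const c k = if k == 0%N then c%:A else 0 :> fps.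
Proof. by rewrite -fps_constE; apply/funext => n; case: k => //= k; rewrite fps_coef0. Qed.

Lemma bps_scaleE c (F : bps) k : bps_scale c F k = c *: (F k : fps).
Proof. by []. Qed.

Lemma bps_addE (F H : bps) k : bps_add F H k = (F k : fps) + H k.
Proof. by []. Qed.

Section GeometricSeries.

Variable f : fps.

Let W := bps_mul (bps_of_z f) bps_V.

Lemma bps_mul_of_zVE k : W k = if k == 1%N then f * fps_X else 0.
Proof.
rewrite /W bps_mulE; under eq_bigr => i _ do rewrite bps_of_zE.
by rewrite sum_delta0l bps_VE; case: eqP; rewrite ?mulr0.
Qed.

Lemma bps_pow_of_zVE k i : bps_pow W k i = if i == k then (f * fps_X) ^+ k else 0.
Proof.
elim: k i => [|k IH] i; first by rewrite /bps_pow /= bps_constE scale1r.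
rewrite [bps_pow _ _]/= bps_mulE; under eq_bigr => j _ do rewrite bps_mul_of_zVE.
by rewrite sum_delta1l; case: i => [|i] //; rewrite IH eqSS; case: ifP; rewrite ?mulr0 // exprS.
Qed.

Lemma bps_geom_of_zVE i : bps_geom W i = (f * fps_X) ^+ i.
Proof.
apply/funext => n; rewrite /bps_geom.
under eq_bigr => k _ do rewrite bps_pow_of_zVE (fun_if (fun g : fps => g n)) fps_coef0.
rewrite (bigD1 (Ordinal (leq_trans (ltnSn i) (leq_addr _ _)))) //= eqxx big1 ?addr0 // => k.
by rewrite -val_eqE /= eq_sym => /negbTE ->.
Qed.

End GeometricSeries.

Lemma walk_gf_bps D a i :
  let W := bps_mul (bps_of_z (fps_sub3 a)) bps_V in
  walk_gf D a i = bps_mul (bps_scale 2%:R (bps_mul (bps_add (bps_const 2%:R) W)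
                                                  (bps_of_z (fps_sub3 D))))
                          (bps_geom W) i :> fps.
Proof.
move=> W; rewrite bps_mulE.
have head k : bps_scale 2%:R (bps_mul (bps_add (bps_const 2%:R) W) (bps_of_z (fps_sub3 D))) k
    = (if k == 0%N then fps_sub3 D *+ 4 else 0)
      + (if k == 1%N then fps_sub3 a * fps_X * fps_sub3 D *+ 2 else 0) :> fps.
  rewrite bps_scaleE bps_mulE; under eq_bigr do rewrite bps_of_zE.
  rewrite sum_delta0r bps_addE bps_constE /W bps_mul_of_zVE scaler_nat.
  by case: k => [|[|k]] /=; rewrite ?addr0 ?add0r ?mul0r ?mul0rn // scaler_nat; ring.
under eq_bigr => k _ do rewrite head bps_geom_of_zVE mulrDl.
rewrite big_split /= sum_delta0l sum_delta1l.
case: i => [|i]; rewrite ?walk_gf0 ?walk_gfS; first by rewrite addr0 expr0 mulr1.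
by rewrite !exprS exprMn; ring.
Qed.

Theorem theorem2 (g : nat -> fps) (gb : fps) (t : fps)
  (* the defining system of the g_i and g_beta *)
  (h0 : g 0%N = fps_add (fps_const 1)
          (fps_add (fps_mul fps_X gb) (fps_scale q_step (fps_mul fps_X (g 2%N)))))
  (hb : gb = fps_scale q_step (fps_mul fps_X (g 1%N)))
  (h1 : g 1%N = fps_add (fps_mul fps_X (g 0%N))
          (fps_scale q_step (fps_mul fps_X (g 3%N))))
  (hi : forall i, (2 <= i)%N ->
          g i = fps_add (fps_scale p_step (fps_mul fps_X (g i.-1)))
                        (fps_scale q_step (fps_mul fps_X (g i.+2))))
  (* t = t(x): t(0) = 0 and x = 27/4 t (1-t)^2 *)
  (ht0 : t 0%N = 0)
  (ht : fps_X = fps_scale (27%:R / 4%:R)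
          (fps_mul t (fps_pow (fps_add (fps_const 1) (fps_scale (-1) t)) 2))) :
  let G : bps := fun i n => g i n in
  (* a = 2/(3(1-t)),  Dinv = 1/((1-3t)(4-3t)), as series in x *)
  let a : fps := fps_scale (2%:R / 3%:R)
                   (fps_inv (fps_add (fps_const 1) (fps_scale (-1) t))) in
  let Dinv : fps := fps_inv (fps_mul (fps_add (fps_const 1) (fps_scale (-3%:R) t))
                                     (fps_add (fps_const 4%:R) (fps_scale (-3%:R) t))) in
  let W : bps := bps_mul (bps_of_z (fps_sub3 a)) bps_V in
  (* (i) *)
  (G = bps_mul (bps_scale 2%:R (bps_mul (bps_add (bps_const 2%:R) W)
                                         (bps_of_z (fps_sub3 Dinv))))
               (bps_geom W)
   /\ (forall j n, G j n != 0 -> (j <= n)%N /\ (3 %| (n - j))%N))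
  (* (ii) *)
  /\ (forall j, (1 <= j)%N ->
        (fun k => G j (j + 3 * k)%N) = fps_scale 6%:R (fps_mul Dinv (fps_pow a j))
        /\ g j = fps_shift j (fps_sub3 (fps_scale 6%:R (fps_mul Dinv (fps_pow a j)))))
  (* (iii) *)
  /\ (forall j N, (1 <= j)%N ->
        G j (j + 3 * N)%N =
        \sum_(i < N.+1) (2 ^ (2 * i + j - 1))%:R / (3 ^ (2 * N + i + j - 1))%:R
                        * ('C(2 * N + j + i, i))%:R)
  (* (iv) *)
  /\ (forall N,
        g 0%N (3 * N)%N =
          \sum_(i < N.+1) (2 ^ (2 * i))%:R / (3 ^ (2 * N + i))%:R
                          * ('C(2 * N + i, i))%:R
        /\ gb (3 * N + 2)%N = (1 / 3%:R) * g 1%N (3 * N + 1)%N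
        /\ (1 / 3%:R) * g 1%N (3 * N + 1)%N =
          \sum_(i < N.+1) (2 ^ (2 * i))%:R / (3 ^ (2 * N + i + 1))%:R
                          * ('C(2 * N + 1 + i, i))%:R).
Proof.
move=> G a Dinv W.
have one_t : fps_add (fps_const 1) (fps_scale (-1) t) = 1 - t := congr1 (+%R 1) (scaleN1r t).
have aE : a = (2%:R / 3%:R) *: fps_inv (1 - t) by rewrite /a one_t.
have DE : Dinv = fps_inv ((1 - 3%:R * t) * (4%:R - 3%:R * t)).
  by rewrite mulr_natl -scaler_nat -scaleNr /Dinv (fps_constE 4%:R) scaler_nat.
rewrite fps_powE one_t in ht.
have [a_eq D_eq] := param_series_eqs ht0 ht; rewrite -aE -DE in a_eq D_eq.
have sys_g : walk_system g gb by split.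
have [gE _] := walk_system_unique sys_g (walk_gf_system a_eq D_eq).
have coefE j N : (Dinv * a ^+ j) N = walk_coef j N.
  exact: walk_rec_unique (fps_coef_walk_rec a_eq D_eq) walk_coef_rec j N.
rewrite /G gE; split; [split|split; [|split]].
- by apply/funext => i; apply: walk_gf_bps.
- exact: walk_gf_support.
- move=> j j1; split; last by rewrite fps_shiftE fps_powE /walk_gf; case: j j1.
  by apply/funext => k; rewrite walk_gf_coef // fps_powE.
- by case=> // j N _; rewrite walk_gf_coef // coefE walk_coef_sumS.
- move=> N; split; last split.
  + by rewrite walk_gf_coef0 -walk_coef_sum0 -coefE expr0 mulr1.
  + by rewrite (hb : gb = q_step *: (fps_X * g 1%N)) fps_coefZ addnS fps_coefXM gE.
  + by rewrite addnC walk_gf_coef // coefE walk_coef_sum1.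
Qed.
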